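(* (1) Let $m\ge2$ be an integer and $f(h)=h^m$. Then for every $n\in\mathbb{N}$, $\mathcal{H}(f)$ has infinitely many two-sided ideals $I$ such that $\mathcal{H}(f)/I\cong M_n(\mathbb{C})$ (the algebra of $n\times n$ complex matrices). (2) For $f(h)=h^2+2h-3/4$, the algebra $\mathcal{H}(f)$ has no simple module of dimension $2$.
   Context: For $f(h)\in\mathbb{C}[h]$, $\mathcal{H}(f)$ is the unital associative $\mathbb{C}$-algebra generated by $x,y,h$ with relations $hx=xf(h)$, $yh=f(h)y$, $yx-xy=f(h)-h$. $\mathbb{N}$ denotes the positive integers. *)

From HB Require Import structures.
From mathcomp Require Import all_boot all_order all_algebra.
Set Implicit Arguments. Unset Strict Implicit. Unset Printing Implicit Defensive.
Import Order.TTheory GRing.Theory Num.Theory.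
Local Open Scope ring_scope.

(* Noncommutative polynomial expressions in the generators x, y, h with
   coefficients in C: elements of the free algebra C<x,y,h>.
   H(f) is the quotient of this free algebra by the defining relations. *)
Inductive ncterm (C : Type) : Type :=
  | NCx | NCy | NCh
  | NCconst of C
  | NCadd of ncterm C & ncterm C
  | NCmul of ncterm C & ncterm C.

Fixpoint nceval (C : comNzRingType) (n : nat) (X Y H : 'M[C]_n.+1)
    (t : ncterm C) : 'M[C]_n.+1 :=
  match t with
  | NCx => X
  | NCy => Y
  | NCh => H
  | NCconst c => c%:M
  | NCadd t1 t2 => nceval X Y H t1 + nceval X Y H t2
  | NCmul t1 t2 => nceval X Y H t1 * nceval X Y H t2
  end.

(* The triple (X,Y,H) satisfies the defining relations of H(f):
   hx = x f(h), yh = f(h) y, yx - xy = f(h) - h.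
   Equivalently x |-> X, y |-> Y, h |-> H defines an algebra map H(f) -> M_{n+1}(C). *)
Definition Hf_rel (C : comNzRingType) (n : nat) (f : {poly C})
    (X Y H : 'M[C]_n.+1) : Prop :=
  [/\ H * X = X * horner_mx H f,
      Y * H = horner_mx H f * Y &
      Y * X - X * Y = horner_mx H f - H].

(* The algebra map H(f) -> M_{n+1}(C) given by (X,Y,H) is surjective. *)
Definition Hf_rep_onto (C : comNzRingType) (n : nat) (X Y H : 'M[C]_n.+1) : Prop :=
  forall A : 'M[C]_n.+1, exists t : ncterm C, nceval X Y H t = A.

(* Two representations have different kernels (as subsets of H(f),
   equivalently of the free algebra, since both contain the relations). *)
Definition Hf_ker_differ (C : comNzRingType) (n : nat)
    (X Y H X' Y' H' : 'M[C]_n.+1) : Prop :=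
  exists t : ncterm C, (nceval X Y H t == 0) != (nceval X' Y' H' t == 0).

(* A 2-dimensional left H(f)-module is C^2 (column vectors) with x,y,h acting
   by matrices X,Y,H satisfying the relations.  Submodules are subspaces of
   column vectors stable under X,Y,H; we encode a subspace W of column vectors
   by a matrix U whose rows span W^T, so W is A-stable iff (U *m A^T <= U)%MS. *)
Definition simple_mod2 (C : fieldType) (X Y H : 'M[C]_2) : Prop :=
  forall U : 'M[C]_2,
    (U *m X^T <= U)%MS -> (U *m Y^T <= U)%MS -> (U *m H^T <= U)%MS ->
    U = 0 \/ row_full U.

From HB Require Import structures.
From mathcomp Require Import all_boot all_order all_algebra.
From mathcomp Require Import fingroup perm cyclic separable cyclotomic.
From mathcomp Require Import ring zify.
Set Implicit Arguments. Unset Strict Implicit. Unset Printing Implicit Defensive.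
Import Order.TTheory GRing.Theory Num.Theory.
Local Open Scope ring_scope.

(* (1) Let z be a primitive (m^(n+1) - 1)-th root of unity and lambda_i = z^(m^(n-i)),
   so that the lambda_i are distinct and lambda_i = lambda_(i+1)^m cyclically.  With
   x the cyclic permutation matrix, h = diag(lambda) and y = diag(lambda^m + t) x^T the
   relations of H(h^m) hold for every t.  Polynomials in h give all diagonal matrix
   units and powers of x move them to every position, so each representation is
   onto M_(n+1); and yx - h^m acts as the scalar t, so distinct t give distinct kernels.
   (2) Put g = f - X, so M = g(h) = yx - xy has trace 0.  If M = 0 then x, y, h commute
   and share an eigenvector.  If M is singular but nonzero then M^2 = 0, and g(f) is
   divisible by g, whence M x M = M y M = M h M = 0 and the image of M is a common
   eigenline.  If M is invertible, h has eigenvalues a, b with g(a) + g(b) = 0; y kills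
   both eigenvectors (otherwise f(a) = b, but g(a) + g(f(a)) = g(a) (a + 3/2)^2 is
   nonzero), so y = 0 and M = 0.  A common left eigenvector yields a one-dimensional
   submodule of the column module. *)

Lemma horner_mx_comp (R : comNzRingType) n (A : 'M[R]_n.+1) (p q : {poly R}) :
  horner_mx (horner_mx A q) p = horner_mx A (p \Po q).
Proof.
elim/poly_ind: p => [|p c IHp]; first by rewrite comp_poly0 !rmorph0.
by rewrite comp_poly_MXaddC !rmorphD !rmorphM /= IHp !horner_mx_X !horner_mx_C.
Qed.

Lemma horner_mx_intertwine (R : comNzRingType) n (A B K : 'M[R]_n.+1)
    (p : {poly R}) :
  A * K = K * B -> horner_mx A p * K = K * horner_mx B p.
Proof.
move=> AK; elim/poly_ind: p => [|p c IHp]; first by rewrite !rmorph0 mul0r mulr0.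
rewrite !rmorphD !rmorphM /= !horner_mx_X !horner_mx_C mulrDl mulrDr.
by rewrite -mulrA AK mulrA IHp -mulrA -!mulmxE scalar_mxC.
Qed.

Lemma eigenvector_horner_mx (R : comNzRingType) n (A : 'M[R]_n.+1)
    (u : 'rV_n.+1) a (p : {poly R}) :
  u *m A = a *: u -> u *m horner_mx A p = p.[a] *: u.
Proof.
move=> uA; elim/poly_ind: p => [|p c IHp].
  by rewrite rmorph0 mulmx0 horner0 scale0r.
rewrite rmorphD rmorphM /= horner_mx_X horner_mx_C mulmxDr -mulmxE mulmxA IHp.
by rewrite -scalemxAl uA scalerA mul_mx_scalar !hornerE scalerDl.
Qed.

Section MatrixTwo.
Variable F : fieldType.
Implicit Types (A N : 'M[F]_2) (u w : 'rV[F]_2).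

Lemma char_poly2 A : char_poly A = 'X^2 - (\tr A)%:P * 'X + (\det A)%:P.
Proof.
apply/polyP => i; rewrite coefD coefB coefCM coefXn coefX coefC.
case: i => [|[|[|i]]] /=.
- by rewrite char_poly_det expr2 mulrNN !mul1r; ring.
- by rewrite (char_poly_trace A) //; ring.
- have /monicP := char_poly_monic A.
  by rewrite lead_coefE size_char_poly /= => ->; ring.
- by rewrite nth_default ?size_char_poly //; ring.
Qed.

Lemma Cayley_Hamilton2 A : A ^+ 2 = \tr A *: A - (\det A)%:M.
Proof.
apply/eqP; rewrite -subr_eq0 -(Cayley_Hamilton A) char_poly2.
rewrite !rmorphD !rmorphN !rmorphM /= !horner_mx_X !horner_mx_C -expr2.
by rewrite -mulmxE mul_scalar_mx opprD opprK addrA.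
Qed.

Lemma eigenvalue2 A a : eigenvalue A a = (a ^+ 2 - \tr A * a + \det A == 0).
Proof. by rewrite eigenvalue_root_char char_poly2 /root !hornerE. Qed.

Lemma mxtrace_sqr2 A : \tr (A ^+ 2) = \tr A ^+ 2 - 2%:R * \det A.
Proof. by rewrite Cayley_Hamilton2 raddfB /= mxtraceZ mxtrace_scalar mulr_natl. Qed.

Lemma ker2_sub_line N u w :
  N != 0 -> u != 0 -> u *m N = 0 -> w *m N = 0 -> (w <= u)%MS.
Proof.
move=> N0 u0 /sub_kermxP uK /sub_kermxP wK; apply: submx_trans wK _.
have [le_uK <-] := mxrank_leqif_sup uK.
rewrite eqn_leq le_uK andTb mxrank_ker rank_rV u0 leq_subLR addn1 ltnS.
by rewrite lt0n mxrank_eq0.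
Qed.

Lemma square_zero_common_line (As : seq 'M[F]_2) N :
  N != 0 -> N * N = 0 -> all (fun A => N * A * N == 0) As ->
  exists2 v : 'rV_2, v != 0 & all (fun A => stablemx v A) As.
Proof.
move=> N0 NN NAN; have [v /submxP[w ->] v0] := rowV0Pn N0.
have wNN : w *m N *m N = 0 by rewrite -mulmxA mulmxE NN mulmx0.
exists (w *m N) => //; apply/allP => A /(allP NAN)/eqP NAN0.
apply: (ker2_sub_line N0 v0 wNN).
by rewrite -!mulmxA (mulmxA N) -[N *m A *m N]/(N * A * N) NAN0 mulmx0.
Qed.

(* The column subspace annihilated by the row v is stable; its transpose is the row
   space of kermx v^T. *)
Lemma stable_line_not_simple (X Y H : 'M[F]_2) (v : 'rV_2) :
  v != 0 -> all (fun A => stablemx v A) [:: X; Y; H] -> ~ simple_mod2 X Y H.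
Proof.
move=> v0 /and4P[vX vY vH _].
have stable_ker A : stablemx v A -> (kermx v^T *m A^T <= kermx v^T)%MS.
  case/sub_rVP=> k vA; apply/sub_kermxP.
  by rewrite -mulmxA -trmx_mul vA linearZ /= -scalemxAr mulmx_ker scaler0.
have rk1 : \rank (kermx v^T) = 1%N by rewrite mxrank_ker mxrank_tr rank_rV v0.
case/(_ _ (stable_ker _ vX) (stable_ker _ vY) (stable_ker _ vH)) => [K0|].
  by rewrite K0 mxrank0 in rk1.
by rewrite /row_full rk1.
Qed.

End MatrixTwo.

Lemma Hf_rel_trace (R : comNzRingType) n (f : {poly R}) (X Y H : 'M[R]_n.+1) :
  Hf_rel f X Y H -> \tr (horner_mx H (f - 'X)) = 0.
Proof.
case=> _ _ YX; rewrite rmorphB /= horner_mx_X -YX raddfB /=.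
by rewrite -!mulmxE mxtrace_mulC subrr.
Qed.

Lemma Hf_rel_eigenvector (R : comNzRingType) n (f : {poly R}) (X Y H : 'M[R]_n.+1)
    (u : 'rV_n.+1) a :
  Hf_rel f X Y H -> u *m H = a *: u -> u *m Y *m H = f.[a] *: (u *m Y).
Proof.
case=> _ YH _ uH.
by rewrite -mulmxA mulmxE YH -mulmxE mulmxA (eigenvector_horner_mx _ uH) -scalemxAl.
Qed.

Section Generated.
Variables (R : comNzRingType) (n : nat) (X Y H : 'M[R]_n.+1).

Definition generated (A : 'M[R]_n.+1) := exists t : ncterm R, nceval X Y H t = A.

Lemma generated_scalar a : generated a%:M. Proof. by exists (NCconst a). Qed.

Lemma generated0 : generated 0.
Proof. by exists (NCconst 0); apply/matrixP => i j; rewrite !mxE mul0rn. Qed.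

Lemma generatedD A B : generated A -> generated B -> generated (A + B).
Proof. by move=> [t1 <-] [t2 <-]; exists (NCadd t1 t2). Qed.

Lemma generatedM A B : generated A -> generated B -> generated (A * B).
Proof. by move=> [t1 <-] [t2 <-]; exists (NCmul t1 t2). Qed.

Lemma generatedZ a A : generated A -> generated (a *: A).
Proof. by rewrite -mul_scalar_mx; apply/generatedM/generated_scalar. Qed.

Lemma generated_sum (I : finType) (F : I -> 'M[R]_n.+1) :
  (forall i, generated (F i)) -> generated (\sum_i F i).
Proof.
by move=> genF; apply: (big_ind generated generated0 generatedD) => i _; apply: genF.
Qed.

Lemma generated_expX e : generated (X ^+ e).
Proof.
elim: e => [|e IHe]; first exact: generated_scalar.
by rewrite exprS; apply: generatedM IHe; exists (NCx R).
Qed.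

Lemma generated_horner_mx p : generated (horner_mx H p).
Proof.
elim/poly_ind: p => [|p c IHp]; first by rewrite rmorph0; apply: generated0.
rewrite rmorphD rmorphM /= horner_mx_X horner_mx_C.
by apply: generatedD (generated_scalar c); apply: generatedM IHp _; exists (NCh R).
Qed.

End Generated.

Lemma prim_root_exists (F : closedFieldType) (K : nat) :
  (0 < K)%N -> K%:R != 0 :> F -> exists z : F, K.-primitive_root z.
Proof.
move=> K_gt0 K0; pose p : {poly F} := 'X^K - 1.
have [r Dp] := closed_field_poly_normal p.
rewrite (monicP _) ?monicXnsubC // scale1r in Dp.
have rn1 : all K.-unity_root r by apply/allP=> z; rewrite -root_prod_XsubC -Dp.
have sz_r : (K < (size r).+1)%N by rewrite -(size_prod_XsubC r id) -Dp size_XnsubC.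
have [|z] := hasP (has_prim_root K_gt0 rn1 _ sz_r); last by exists z.
by rewrite -separable_prod_XsubC -Dp separable_Xn_sub_1.
Qed.

Lemma perm_mx_diag (R : pzSemiRingType) n (s : 'S_n) (d : 'rV[R]_n) :
  perm_mx s *m diag_mx d = diag_mx (\row_i d 0 (s i)) *m perm_mx s.
Proof.
apply/matrixP => i j; rewrite mul_diag_mx mul_mx_diag !mxE.
by case: eqP => [<-|_]; rewrite ?mulr1 ?mul1r ?mulr0 ?mul0r.
Qed.

Lemma perm_mx_delta (R : pzSemiRingType) n (s : 'S_n) (i j : 'I_n) :
  perm_mx s *m delta_mx (s i) j = delta_mx i j :> 'M[R]_n.
Proof.
by apply/matrixP => k l; rewrite -row_permE !mxE (inj_eq perm_inj).
Qed.

Section CyclicRepresentation.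
Variables (F : numClosedFieldType) (m n : nat) (z : F).
Hypotheses (m_gt1 : (1 < m)%N) (z_prim : ((m ^ n.+1).-1).-primitive_root z).

(* The lambda_i are the orbit of z under t |-> t^m, of exact length n+1 since z has
   order m^(n+1) - 1; the cyclic shift x then intertwines h with h^m. *)
Definition lambda (i : 'I_n.+1) : F := z ^+ (m ^ (n - i)).
Definition shift : 'S_n.+1 := perm (@ordS_inj n.+1).
Definition Xrep : 'M[F]_n.+1 := perm_mx shift.
Definition Hrep : 'M[F]_n.+1 := diag_mx (\row_i lambda i).
Definition Yrep (t : F) : 'M[F]_n.+1 :=
  diag_mx (\row_i (lambda i ^+ m + t)) *m Xrep^T.

Lemma z_exp_m_pow : z ^+ (m ^ n.+1) = z.
Proof.
have m_pow_gt0 : (0 < m ^ n.+1)%N by rewrite expn_gt0 (ltnW m_gt1).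
by rewrite -(prednK m_pow_gt0) exprS prim_expr_order // mulr1.
Qed.

Lemma lambda_shift i : lambda i = lambda (shift i) ^+ m.
Proof.
rewrite /lambda -exprM -expnSr permE /=.
have [i_lt_n | i_ge_n] := ltnP i n; first by rewrite modn_small ?ltnS // subnSK.
have -> : (i : nat) = n by apply/eqP; rewrite eqn_leq i_ge_n -ltnS ltn_ord.
by rewrite modnn subn0 subnn expn0 expr1 z_exp_m_pow.
Qed.

Lemma lambda_inj : injective lambda.
Proof.
move=> i j /eqP; rewrite /lambda (eq_prim_root_expr z_prim).
have [n0 | n_gt0] := posnP n.
  by move=> _; apply: ord_inj; have := ltn_ord i; have := ltn_ord j; lia.
have lt_pow k : (k <= n)%N -> (m ^ k < (m ^ n.+1).-1)%N.
  move=> le_kn; have : (m ^ k <= m ^ n)%N by rewrite leq_pexp2l // ltnW.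
  have : (m ^ 1 <= m ^ n)%N by rewrite leq_pexp2l // ltnW.
  by rewrite expn1 ltn_predRL expnS; nia.
rewrite !modn_small ?lt_pow ?leq_subr // => /eqP /(expnI m_gt1) e.
by apply: val_inj => /=; have := ltn_ord i; have := ltn_ord j; lia.
Qed.

Lemma horner_mx_Hrep p : horner_mx Hrep p = diag_mx (\row_i p.[lambda i]).
Proof. by rewrite horner_mx_diag; congr diag_mx; apply/rowP => i; rewrite !mxE. Qed.

Lemma Xrep_orthogonal : Xrep^T *m Xrep = 1%:M /\ Xrep *m Xrep^T = 1%:M.
Proof.
by rewrite /Xrep tr_perm_mx -!perm_mxM mulVg mulgV perm_mx1.
Qed.

Lemma Hrep_Xrep : Hrep * Xrep = Xrep * horner_mx Hrep ('X ^+ m).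
Proof.
rewrite horner_mx_Hrep -mulmxE perm_mx_diag mulmxE; congr (diag_mx _ * _).
by apply/rowP => i; rewrite !mxE hornerXn -lambda_shift.
Qed.

Lemma Yrep_Hrep t : Yrep t * Hrep = horner_mx Hrep ('X ^+ m) * Yrep t.
Proof.
rewrite horner_mx_Hrep /Yrep /Xrep tr_perm_mx -!mulmxE -mulmxA perm_mx_diag.
rewrite !mulmxA diag_mx_comm; congr (diag_mx _ *m _ *m _).
by apply/rowP => i; rewrite !mxE hornerXn (lambda_shift (shift^-1 i)%g) permKV.
Qed.

Lemma Yrep_Xrep t :
  Yrep t * Xrep - Xrep * Yrep t = horner_mx Hrep ('X ^+ m) - Hrep.
Proof.
have [trX_X X_trX] := Xrep_orthogonal.
rewrite horner_mx_Hrep /Yrep -!mulmxE -mulmxA trX_X mulmx1 mulmxA /Xrep.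
rewrite perm_mx_diag -mulmxA X_trX mulmx1; apply/matrixP => i j; rewrite !mxE.
by case: (i == j); rewrite ?mulr0n ?mulr1n ?subrr // hornerXn -lambda_shift; ring.
Qed.

Lemma shift_expE e (i : 'I_n.+1) : val ((shift ^+ e)%g i) = ((i + e) %% n.+1)%N.
Proof.
rewrite permX; elim: e => [|e IHe] /=; first by rewrite addn0 modn_small.
by rewrite permE /= IHe -addn1 modnDml addn1 addnS.
Qed.

Lemma shift_transitive i j : exists e, (shift ^+ e)%g i = j.
Proof.
exists (j + (n.+1 - i))%N; apply: val_inj.
rewrite shift_expE addnA addnC addnA subnK; last exact: ltnW.
by rewrite addnC modnDr modn_small.
Qed.

Lemma Xrep_exp e : Xrep ^+ e = perm_mx (shift ^+ e)%g.
Proof.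
elim: e => [|e IHe]; first by rewrite expr0 expg0 perm_mx1.
by rewrite exprS IHe expgS perm_mxM.
Qed.

Lemma delta_diag_generated t j : generated Xrep (Yrep t) Hrep (delta_mx j j).
Proof.
pose c := \prod_(k | k != j) (lambda j - lambda k).
have c0 : c != 0.
  apply/prodf_neq0 => k kj; rewrite subr_eq0.
  by apply: contra kj => /eqP/lambda_inj ->.
have -> : delta_mx j j = c^-1 *: horner_mx Hrep (\prod_(k | k != j) ('X - (lambda k)%:P)).
  rewrite horner_mx_Hrep; apply/matrixP => i i'; rewrite !mxE horner_prod.
  under eq_bigr do rewrite hornerXsubC.
  have [->|ij] := eqVneq i j; first by rewrite -/c mulrnAr mulVf // eq_sym.
  by rewrite (bigD1 i ij) /= subrr mul0r mul0rn mulr0.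
exact/generatedZ/generated_horner_mx.
Qed.

Lemma Hrep_onto t : Hf_rep_onto Xrep (Yrep t) Hrep.
Proof.
move=> A; rewrite (matrix_sum_delta A).
apply: generated_sum => i; apply: generated_sum => j; apply: generatedZ.
have [e <-] := shift_transitive i j.
rewrite -(perm_mx_delta _ (shift ^+ e)%g) -Xrep_exp.
exact/generatedM/delta_diag_generated/generated_expX.
Qed.

Fixpoint nc_hpow (e : nat) : ncterm F :=
  if e is e'.+1 then NCmul (NCh F) (nc_hpow e') else NCconst 1.

Definition yx_minus_hm (s : F) : ncterm F :=
  NCadd (NCmul (NCy F) (NCx F)) (NCadd (NCmul (NCconst (-1)) (nc_hpow m)) (NCconst (- s))).

Lemma nceval_yx_minus_hm t s : nceval Xrep (Yrep t) Hrep (yx_minus_hm s) = (t - s)%:M.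
Proof.
have hpowE e : nceval Xrep (Yrep t) Hrep (nc_hpow e) = Hrep ^+ e.
  by elim: e => [|e IHe] //=; rewrite IHe exprS.
have [trX_X _] := Xrep_orthogonal.
rewrite /= hpowE.
have -> : Hrep ^+ m = horner_mx Hrep ('X ^+ m) by rewrite rmorphXn /= horner_mx_X.
rewrite horner_mx_Hrep /Yrep -mulmxE -mulmxA trX_X mulmx1 mul_scalar_mx scaleN1r.
apply/matrixP => i j; rewrite !mxE hornerXn.
by case: (i == j); rewrite ?mulr0n ?mulr1n ?subrr ?oppr0 ?addr0 //; ring.
Qed.

End CyclicRepresentation.

Lemma matrix_quotients_Xm (F : numClosedFieldType) m : (2 <= m)%N ->
  forall n, exists T : nat -> 'M[F]_n.+1 * 'M[F]_n.+1 * 'M[F]_n.+1,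
     (forall k, let: (X, Y, H) := T k in
        Hf_rel ('X ^+ m) X Y H /\ Hf_rep_onto X Y H) /\
     (forall k l, k <> l ->
        let: (X, Y, H) := T k in let: (X', Y', H') := T l in
        Hf_ker_differ X Y H X' Y' H').
Proof.
move=> m_gt1 n.
have K_gt0 : (0 < (m ^ n.+1).-1)%N.
  by rewrite ltn_predRL -[1%N](expn0 m) ltn_exp2l.
have [z z_prim] : exists z : F, ((m ^ n.+1).-1).-primitive_root z.
  by apply: prim_root_exists => //; rewrite pnatr_eq0 -lt0n.
have scalar_eq0 a : ((a%:M : 'M[F]_n.+1) == 0) = (a == 0).
  by rewrite -scalemx1 scalemx_eq0 oner_eq0 orbF.
exists (fun k => (Xrep F n, Yrep m n z k%:R, Hrep m n z)); split.
  move=> k; split; last exact: Hrep_onto.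
  split; [exact: Hrep_Xrep | exact: Yrep_Hrep | exact: Yrep_Xrep].
move=> k l kl; exists (yx_minus_hm m l%:R).
by rewrite !nceval_yx_minus_hm !scalar_eq0 subrr eqxx subr_eq0 eqr_nat eqb_id; apply/eqP.
Qed.

Section QuadraticRelation.
Variable F : numClosedFieldType.

Definition fq : {poly F} := 'X ^+ 2 + 2%:R *: 'X - (3%:R / 4%:R)%:P.
Definition gq : {poly F} := fq - 'X.

Lemma gq_comp_fq : gq \Po fq = gq * (gq + 2%:R *: 'X + (2%:R)%:P).
Proof.
rewrite {1}/gq comp_polyB comp_polyX {1}/fq comp_polyB comp_polyD comp_polyZ.
by rewrite comp_polyX comp_polyC rmorphXn /= comp_polyX /gq /fq !scaler_nat; ring.
Qed.

(* This is where the constant 3/4 matters. *)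
Lemma gq_fq_sum_neq0 a : gq.[a] != 0 -> gq.[a] + gq.[fq.[a]] != 0.
Proof.
have two0 : (2%:R : F) != 0 by rewrite pnatr_eq0.
have four0 : (4%:R : F) != 0 by rewrite pnatr_eq0.
have gqE : gq.[a] = (a + 3%:R / 2%:R) * (a - 1 / 2%:R).
  by rewrite /gq /fq !hornerE; field.
move=> ga; rewrite -horner_comp gq_comp_fq hornerM -{1}[gq.[a]]mulr1 -mulrDr.
have -> : 1 + (gq + 2%:R *: 'X + (2%:R)%:P).[a] = (a + 3%:R / 2%:R) ^+ 2.
  by rewrite /gq /fq !(hornerD, hornerN, hornerZ, hornerC, hornerX, hornerXn); field.
rewrite mulf_neq0 // expf_neq0 //; apply: contraNneq ga => a0.
by rewrite gqE a0 mul0r.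
Qed.

Section Representation2.
Variables X Y H : 'M[F]_2.
Hypothesis rel : Hf_rel fq X Y H.
Let M := horner_mx H gq.

Let ME : M = horner_mx H fq - H.
Proof. by rewrite /M /gq rmorphB /= horner_mx_X. Qed.

Let trM : \tr M = 0 := Hf_rel_trace rel.

Lemma Hfq_sandwich : M * M = 0 -> all (fun A => M * A * M == 0) [:: X; Y; H].
Proof.
move=> MM; set R := horner_mx H (gq + 2%:R *: 'X + (2%:R)%:P).
have RM : R * M = M * R := comm_horner_mx2 H _ _.
have HM : H * M = M * H by have := comm_horner_mx2 H 'X gq; rewrite horner_mx_X.
have gF : horner_mx (horner_mx H fq) gq = M * R.
  by rewrite horner_mx_comp gq_comp_fq rmorphM.
case: rel => HX YH _.
have MX : M * X = X * (M * R) by rewrite -gF; apply: horner_mx_intertwine.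
have YM : Y * M = M * R * Y by rewrite -gF; apply/esym/horner_mx_intertwine.
apply/and4P; split => //; apply/eqP.
- by rewrite MX -!mulrA RM (mulrA M M) MM mul0r mulr0.
- by rewrite -mulrA YM !mulrA MM !mul0r.
- by rewrite -HM -mulrA MM mulr0.
Qed.

Lemma Hfq_gq_eigenvalue_neq0 a (u : 'rV_2) :
  \det M != 0 -> u != 0 -> u *m H = a *: u -> gq.[a] != 0.
Proof.
move=> dM u0 uH; apply: contra u0 => /eqP ga0.
have uM : u *m M = 0 by rewrite (eigenvector_horner_mx _ uH) ga0 scale0r.
by rewrite -(mulmx_free_eq0 _ (_ : row_free M)) ?uM // row_free_unit unitmxE unitfE.
Qed.

Lemma Hfq_root_sum a :
  a ^+ 2 - \tr H * a + \det H = 0 -> gq.[a] + gq.[\tr H - a] = 0.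
Proof.
move=> ra; have := trM; rewrite /M /gq /fq.
rewrite !rmorphB !rmorphD /= horner_mxZ rmorphXn /= horner_mx_X horner_mx_C.
rewrite !raddfB !raddfD /= mxtraceZ mxtrace_sqr2 mxtrace_scalar => trM0.
have dE : \det H = \tr H * a - a ^+ 2.
  by apply/eqP; rewrite -subr_eq0 -[X in _ == X]ra; apply/eqP; ring.
rewrite dE in trM0; apply: (etrans _ trM0).
by rewrite !(hornerD, hornerN, hornerZ, hornerC, hornerX, hornerXn); ring.
Qed.

(* u Y is an eigenvector for f(a), and f(a) - a = g(a) is nonzero, so f(a) would be
   the other eigenvalue tr H - a. *)
Lemma Hfq_eigenvector_kerY a (u : 'rV_2) :
  \det M != 0 -> u != 0 -> u *m H = a *: u -> u *m Y = 0.
Proof.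
move=> dM u0 uH; have ga := Hfq_gq_eigenvalue_neq0 dM u0 uH.
have ra : a ^+ 2 - \tr H * a + \det H = 0.
  by apply/eqP; rewrite -eigenvalue2; apply/eigenvalueP; exists u.
apply/eqP; apply: contraT => uY0.
have rfa : fq.[a] ^+ 2 - \tr H * fq.[a] + \det H = 0.
  apply/eqP; rewrite -eigenvalue2; apply/eigenvalueP.
  by exists (u *m Y); rewrite ?(Hf_rel_eigenvector rel uH).
have gqE : gq.[a] = fq.[a] - a by rewrite /gq hornerD hornerN hornerX.
have : (fq.[a] - a) * (fq.[a] - (\tr H - a)) = 0.
  by rewrite -[RHS]subr0 -{1}rfa -ra; ring.
move/eqP; rewrite mulf_eq0 -gqE (negPf ga) /= subr_eq0 => /eqP fa.
by have := gq_fq_sum_neq0 ga; rewrite fa Hfq_root_sum ?eqxx.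
Qed.

Lemma Hfq_det_M : \det M = 0.
Proof.
apply/eqP; apply: contraT => dM.
have [a /[dup] /eigenvalueP[u uH u0]] := eigenvalue_closed H (ltn0Sn 1).
rewrite eigenvalue2 => /eqP ra.
have /eigenvalueP[w wH w0] : eigenvalue H (\tr H - a).
  by rewrite eigenvalue2 -ra; apply/eqP; ring.
have Y0 : Y != 0.
  apply: contra dM => /eqP Y0; case: rel => _ _.
  by rewrite ME Y0 mul0r mulr0 subrr => <-; rewrite det0.
have /sub_rVP[k wk] := ker2_sub_line Y0 u0 (Hfq_eigenvector_kerY dM u0 uH)
  (Hfq_eigenvector_kerY dM w0 wH).
have ba : \tr H - a = a.
  have : ((\tr H - a) - a) *: w == 0.
    by rewrite scalerBl -wH {1}wk -scalemxAl uH scalerA mulrC -scalerA -wk subrr.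
  by rewrite scaler_eq0 (negPf w0) orbF subr_eq0 => /eqP.
have := Hfq_root_sum ra; rewrite ba -mulr2n -mulr_natr => /eqP.
by rewrite mulf_eq0 pnatr_eq0 orbF (negPf (Hfq_gq_eigenvalue_neq0 dM u0 uH)).
Qed.

Lemma Hfq_common_line :
  exists2 v : 'rV_2, v != 0 & all (fun A => stablemx v A) [:: X; Y; H].
Proof.
case: (eqVneq M 0) => [M0 | M0]; last first.
  have MM : M * M = 0.
    by rewrite -expr2 Cayley_Hamilton2 trM Hfq_det_M scale0r -scalemx1 scale0r subr0.
  exact: square_zero_common_line M0 MM (Hfq_sandwich MM).
have FH : horner_mx H fq = H.
  by apply/eqP; rewrite -subr_eq0 -ME M0.
case: rel; rewrite FH => HX YH /eqP; rewrite subrr subr_eq0 => /eqP YX.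
apply: common_eigenvector => // A B; rewrite !inE.
by case/or3P=> /eqP-> /or3P[]/eqP->; rewrite /comm_mx !mulmxE.
Qed.

End Representation2.

Lemma Hfq_no_simple_module2 :
  ~ exists X Y H : 'M[F]_2, Hf_rel fq X Y H /\ simple_mod2 X Y H.
Proof.
case=> X [Y [H [rel simple]]]; have [v v0 stable] := Hfq_common_line rel.
exact: stable_line_not_simple v0 stable simple.
Qed.

End QuadraticRelation.

Theorem mainTheorem15 (C : numClosedFieldType) :
  (forall (m : nat), (2 <= m)%N ->
   forall (n : nat),
   exists T : nat -> 'M[C]_n.+1 * 'M[C]_n.+1 * 'M[C]_n.+1,
     (forall k, let: (X, Y, H) := T k in
        Hf_rel ('X ^+ m) X Y H /\ Hf_rep_onto X Y H) /\
     (forall k l, k <> l ->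
        let: (X, Y, H) := T k in let: (X', Y', H') := T l in
        Hf_ker_differ X Y H X' Y' H'))
  /\
  ~ (exists X Y H : 'M[C]_2,
       Hf_rel ('X ^+ 2 + 2%:R *: 'X - (3%:R / 4%:R)%:P) X Y H /\
       simple_mod2 X Y H).
Proof. by split; [exact: matrix_quotients_Xm | exact: Hfq_no_simple_module2]. Qed.
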